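(* Let $\Phi\colon\mathcal{X}\to\mathcal{X}$ be an involution, $\Pi$ a closed convex family of conditional distributions $\pi\colon\mathcal{X}\to\Delta(\mathcal{Y})$, $\pi^*\in\mathcal{C}_{\mathrm{coh}}\cap\Pi$, and let $F(p)=\sum_kp_k\log p_k$ be the negative entropy on $\mathbb{R}^d_+$, so $\mathsf{B}_F=\mathsf{D}_{\mathrm{KL}}$ is the unnormalized relative entropy. Let $\overline\pi\in\arg\min_{\pi\in\mathcal{C}^\dagger_{\mathrm{coh}}}\mathsf{B}(\pi\parallel\pi_0)$ and $\widehat{\widehat\pi}\in\arg\min_{\pi\in\mathcal{C}_{\mathrm{coh}}\cap\Pi}\mathsf{B}(\pi\parallel\overline\pi)$. Then $$\mathbb{E}[\mathsf{D}_{\mathrm{KL}}(\pi^*(x)\parallel\pi_0(x))]-\mathbb{E}[\mathsf{D}_{\mathrm{KL}}(\pi^*(x)\parallel\widehat{\widehat\pi}(x))]\ge\mathbb{E}_{x\sim\mathcal{D}_{\mathcal{X}}}\Big[2\min\{\lambda(x),1-\lambda(x)\}\,\mathsf{D}^2_{\mathrm{Hell}}(\pi_0(x)\parallel\pi_0(\Phi(x)))\Big],$$ where $\lambda(x)=\frac{\mathbb{P}[x]}{\mathbb{P}[x]+\mathbb{P}[\Phi(x)]}$.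
   Context: $\mathcal{X},\mathcal{Y}$ finite, $d=|\mathcal{Y}|$; $\Pi_{\mathrm{all}}=\Delta(\mathcal{Y})^{\mathcal{X}}$; $\pi_0\in\Pi_{\mathrm{all}}$ baseline; $\mathcal{D}_{\mathcal{X}}$ full-support distribution on $\mathcal{X}$, $\mathbb{P}[x]=\mathcal{D}_{\mathcal{X}}(x)$, $\mathbb{E}=\mathbb{E}_{x\sim\mathcal{D}_{\mathcal{X}}}$. $\mathsf{B}(\pi\parallel\pi')=\mathbb{E}[\mathsf{B}_F(\pi(x)\parallel\pi'(x))]$. $\mathcal{C}^\dagger_{\mathrm{coh}}=\{\pi\in(\mathbb{R}^d_+)^{\mathcal{X}}:\pi(x)=\pi(\Phi(x))\ \forall x\}$, $\mathcal{C}_{\mathrm{coh}}=\mathcal{C}^\dagger_{\mathrm{coh}}\cap\Pi_{\mathrm{all}}$. Squared Hellinger distance: $\mathsf{D}^2_{\mathrm{Hell}}(p\parallel q)=1-\sum_k\sqrt{p_kq_k}$. *)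

From HB Require Import structures.
From mathcomp Require Import all_boot all_order all_algebra.
From mathcomp Require Import boolp classical_sets reals constructive_ereal ereal exp.
Set Implicit Arguments. Unset Strict Implicit. Unset Printing Implicit Defensive.
Import Order.TTheory GRing.Theory Num.Theory.
Local Open Scope ring_scope.

Section Defs.
Variables (R : realType) (X Y : finType).

Definition policy := X -> Y -> R.

Definition in_simplex (p : Y -> R) : Prop :=
  (forall k, 0 <= p k) /\ \sum_(k : Y) p k = 1.

Definition Pi_all (pi : policy) : Prop := forall x, in_simplex (pi x).

Definition full_support_distr (P : X -> R) : Prop :=
  (forall x, 0 < P x) /\ \sum_(x : X) P x = 1.

Definition involution (Phi : X -> X) : Prop := forall x, Phi (Phi x) = x.

Definition C_coh_dag (Phi : X -> X) (pi : policy) : Prop :=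
  (forall x k, 0 <= pi x k) /\ (forall x, pi x = pi (Phi x)).

Definition C_coh (Phi : X -> X) (pi : policy) : Prop :=
  C_coh_dag Phi pi /\ Pi_all pi.

Definition convex_family (Pi : policy -> Prop) : Prop :=
  forall p q, Pi p -> Pi q -> forall t : R, 0 <= t <= 1 ->
    Pi (fun x k => t * p x k + (1 - t) * q x k).

(* closedness in (R^Y)^X (finite-dimensional, so = sequential closedness
   under coordinatewise convergence) *)
Definition closed_family (Pi : policy -> Prop) : Prop :=
  forall (u : nat -> policy) (l : policy), (forall n, Pi (u n)) ->
    (forall x k (e : R), 0 < e -> exists N, forall n, (N <= n)%N ->
        `|u n x k - l x k| < e) ->
    Pi l.

(* Bregman divergence of F(p) = sum_k p_k log p_k, coordinatewise, with the
   usual conventions 0 log 0 = 0 and p log(p/0) = +oo for p > 0 *)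
Definition kl_term (p q : R) : \bar R :=
  if p == 0 then q%:E
  else if q == 0 then +oo%E
  else (p * ln (p / q) - p + q)%:E.

Definition KL (p q : Y -> R) : \bar R := (\sum_(k : Y) kl_term (p k) (q k))%E.

Definition Bdiv (P : X -> R) (pi pi' : policy) : \bar R :=
  (\sum_(x : X) (P x)%:E * KL (pi x) (pi' x))%E.

Definition hell2 (p q : Y -> R) : R := 1 - \sum_(k : Y) Num.sqrt (p k * q k).

Definition lambda (P : X -> R) (Phi : X -> X) (x : X) : R :=
  P x / (P x + P (Phi x)).

End Defs.

From HB Require Import structures.
From mathcomp Require Import all_boot all_order all_algebra.
From mathcomp Require Import boolp classical_sets reals constructive_ereal ereal exp.
From mathcomp Require Import sequences ring lra.
Set Implicit Arguments. Unset Strict Implicit. Unset Printing Implicit Defensive.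
Import Order.TTheory GRing.Theory Num.Theory.
Local Open Scope ring_scope.

(* The KL projection [a] of [c] onto a convex family satisfies the Pythagorean
   inequality [B(b || a) + B(a || c) <= B(b || c)] for every [b] in the family.
   Along the segment [a + t (b - a)] the three-point identity gives
   [B(. || c) - B(a || c) = B(. || a) + t L <= t^2 Q + t L], so minimality forces
   [L >= 0]; and [b] is absolutely continuous with respect to [a], since otherwise
   a term [t b ln t] makes the slope at [t = 0] equal to [-oo].
   Applied to [pibar] (the projection of [pi0] onto C^dagger_coh) and to [pihh]
   (the projection of [pibar] onto C_coh /\ Pi), two families containing [pistar],
   it yields [B(pistar || pi0) >= B(pistar || pihh) + B(pibar || pi0)].
   Finally [pibar] is coherent, so the terms [x] and [Phi x] of [B(pibar || pi0)]
   compare one vector [q] with [pi0 x] and [pi0 (Phi x)]; weighting both by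
   [min (P x) (P (Phi x))] and using
   [KL(q || p) + KL(q || p') >= sum_k (sqrt p_k - sqrt p'_k)^2 = 2 H^2(p || p')]
   gives the Hellinger term. *)

Section RealKL.
Variable R : realType.
Implicit Types p q u a c t : R.

(* Real-valued [kl_term]: they agree when [p != 0 -> q != 0] ([kl_termE]);
   otherwise [klr] is a junk value. *)
Definition klr p q : R := if p == 0 then q else p * ln (p / q) - p + q.

Lemma kl_termE p q : (p != 0 -> q != 0) -> kl_term p q = (klr p q)%:E.
Proof. by rewrite /kl_term /klr; case: eqP => // _ /(_ isT) /negbTE ->. Qed.

Lemma ln_le_subr1 u : 0 < u -> ln u <= u - 1.
Proof. by move=> u0; have := @le_ln1Dx R (u - 1); rewrite [1 + _]addrC subrK; apply; lra. Qed.

Lemma ln_divr p q : 0 < p -> 0 < q -> ln (p / q) = ln p - ln q.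
Proof. by move=> p0 q0; rewrite ln_div ?posrE. Qed.

Lemma klr_ge0 p q : 0 <= p -> 0 <= q -> (p != 0 -> q != 0) -> 0 <= klr p q.
Proof.
rewrite /klr => p0 q0; case: eqP => // /eqP pn0 /(_ isT) qn0.
have pp : 0 < p by rewrite lt_def pn0.
have qp : 0 < q by rewrite lt_def qn0.
have := ler_wpM2l (ltW pp) (ln_le_subr1 (divr_gt0 qp pp)).
have -> : p * (q / p - 1) = q - p by field; rewrite gt_eqF.
have -> : ln (p / q) = - ln (q / p) by rewrite !ln_divr //; ring.
lra.
Qed.

Lemma klr_le_sqr u a : 0 <= u -> 0 < a -> klr u a <= (u - a) ^+ 2 / a.
Proof.
rewrite /klr => u0 a0; case: eqP => [->|/eqP un0].
  by rewrite sub0r sqrrN expr2 mulfK ?gt_eqF.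
have up : 0 < u by rewrite lt_def un0.
have := ler_wpM2l (ltW up) (ln_le_subr1 (divr_gt0 up a0)).
have -> : (u - a) ^+ 2 / a = u * (u / a - 1) - u + a by field; rewrite gt_eqF.
lra.
Qed.

Lemma klr_three_point u a c : 0 <= u -> 0 < a -> 0 < c ->
  klr u c = klr u a + klr a c + (u - a) * (ln a - ln c).
Proof.
rewrite /klr => u0 a0 c0; rewrite (gt_eqF a0).
case: eqP => [->|/eqP un0]; first by rewrite ln_divr //; ring.
have up : 0 < u by rewrite lt_def un0.
by rewrite !ln_divr //; ring.
Qed.

Lemma klr_scale_from0 t u c : 0 < t -> 0 <= u -> 0 <= c -> (u != 0 -> c != 0) ->
  klr (t * u) c - klr 0 c = t * (klr u c - c + u * ln t).
Proof.
rewrite /klr eqxx => t0 u0 c0; case: (eqVneq u 0) => [->|un0 /(_ isT) cn0].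
  by rewrite mulr0 eqxx => _; ring.
have up : 0 < u by rewrite lt_def un0.
have cp : 0 < c by rewrite lt_def cn0.
have -> : ln (t * u / c) = ln t + ln (u / c) by rewrite -mulrA lnM ?posrE ?divr_gt0.
by rewrite mulf_eq0 (gt_eqF t0) (negbTE un0) /=; ring.
Qed.

Lemma klrD_geometric_mean q p p' : 0 <= q -> 0 <= p -> 0 <= p' ->
  (q != 0 -> p != 0) -> (q != 0 -> p' != 0) ->
  klr q p + klr q p' = 2 * klr q (Num.sqrt p * Num.sqrt p') + (Num.sqrt p - Num.sqrt p') ^+ 2.
Proof.
move=> q0 p0 p'0 hp hp'.
rewrite sqrrB !sqr_sqrtr // /klr; case: eqP => [_|/eqP qn0]; first ring.
have pp : 0 < p by rewrite lt_def hp.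
have pp' : 0 < p' by rewrite lt_def hp'.
have qp : 0 < q by rewrite lt_def qn0.
set s := Num.sqrt p * Num.sqrt p'.
have sp : 0 < s by rewrite mulr_gt0 ?sqrtr_gt0.
have ss : s * s = p * p' by rewrite /s mulrACA -!expr2 !sqr_sqrtr.
have lns : ln p + ln p' = 2 * ln s.
  by rewrite -lnM ?posrE // -ss lnM ?posrE //; ring.
rewrite !ln_divr // (_ : ln p' = 2 * ln s - ln p); [ring | lra].
Qed.

Lemma sqr_sub_sqrt_le_klrD q p p' : 0 <= q -> 0 <= p -> 0 <= p' ->
  (q != 0 -> p != 0) -> (q != 0 -> p' != 0) ->
  (Num.sqrt p - Num.sqrt p') ^+ 2 <= klr q p + klr q p'.
Proof.
move=> q0 p0 p'0 hp hp'; rewrite klrD_geometric_mean // lerDr mulr_ge0 //.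
apply: klr_ge0; rewrite ?mulr_ge0 ?sqrtr_ge0 // => /[dup] /hp ? /hp' ?.
by rewrite mulf_neq0 // sqrtr_eq0 -ltNge lt_def; apply/andP.
Qed.

End RealKL.

Lemma affine_ge0_intercept (R : realFieldType) (Q L : R) :
  (forall t, 0 < t <= 1 -> 0 <= t * Q + L) -> 0 <= L.
Proof.
move=> hQL; rewrite leNgt; apply/negP => L0.
have QL : 0 < `|Q| - L by rewrite subr_gt0 (lt_le_trans L0).
pose t := - L / (`|Q| - L).
have t0 : 0 < t by rewrite divr_gt0 // oppr_gt0.
have t1 : t <= 1 by rewrite ler_pdivrMr // mul1r lerDr.
have := hQL t; rewrite t0 t1 => /(_ isT).
have : t * Q <= t * `|Q| by rewrite ler_wpM2l ?(ltW t0) ?ler_norm.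
have -> : t * `|Q| = - L - L * L / (`|Q| - L) by rewrite /t; field; rewrite gt_eqF.
have : 0 < L * L / (`|Q| - L) by rewrite divr_gt0 ?nmulr_rgt0.
lra.
Qed.

Section WeightedPythagoras.
Variables (R : realType) (S : finType) (w a b c : S -> R).
Hypotheses (w_gt0 : forall s, 0 < w s) (a_ge0 : forall s, 0 <= a s)
  (b_ge0 : forall s, 0 <= b s) (c_ge0 : forall s, 0 <= c s)
  (b_abs_c : forall s, b s != 0 -> c s != 0) (a_abs_c : forall s, a s != 0 -> c s != 0).

Definition wklr (u v : S -> R) : R := \sum_s w s * klr (u s) (v s).

Definition segment (t : R) (s : S) : R := t * b s + (1 - t) * a s.

Lemma segment_ge0 t : 0 <= t -> t <= 1 -> forall s, 0 <= segment t s.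
Proof. by move=> t0 t1 s; rewrite addr_ge0 ?mulr_ge0 ?subr_ge0. Qed.

Let a_gt0 s : a s != 0 -> 0 < a s.
Proof. by rewrite lt_def a_ge0 andbT. Qed.

Let c_gt0 s : a s != 0 -> 0 < c s.
Proof. by move/a_abs_c; rewrite lt_def c_ge0 andbT. Qed.

(* Where [a s = 0] the extra term [b s * ln t] of [klr_segment_le] drives the
   slope at [t = 0] to [-oo]. *)
Definition slope_bound (s : S) : R :=
  if a s == 0 then klr (b s) (c s) - c s
  else (b s - a s) ^+ 2 / a s + (b s - a s) * (ln (a s) - ln (c s)).

Lemma klr_segment_le t s : 0 < t <= 1 ->
  klr (segment t s) (c s) - klr (a s) (c s)
    <= t * (slope_bound s + (if a s == 0 then b s * ln t else 0)).
Proof.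
move=> /andP[t0 t1]; have u0 := segment_ge0 (ltW t0) t1 s.
rewrite /slope_bound /segment in u0 *.
case: eqP => [->|/eqP an0].
  by rewrite mulr0 addr0 klr_scale_from0 ?b_ge0 ?c_ge0 //; exact: b_abs_c.
rewrite (klr_three_point u0 (a_gt0 an0) (c_gt0 an0)) addr0.
have := klr_le_sqr u0 (a_gt0 an0).
have -> : t * b s + (1 - t) * a s - a s = t * (b s - a s) by ring.
set D := (b s - a s) ^+ 2 / a s.
have -> : (t * (b s - a s)) ^+ 2 / a s = t * (t * D) by rewrite /D; ring.
have D0 : 0 <= D by rewrite divr_ge0 ?sqr_ge0.
have : t * (t * D) <= t * D by apply: ler_wpM2l; [exact: ltW | exact: ler_piMl].
lra.
Qed.

Hypothesis a_min : forall t, 0 < t <= 1 -> wklr a c <= wklr (segment t) c.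

Lemma segment_min_support s : b s != 0 -> a s != 0.
Proof.
move=> bn0; apply/negP => /eqP a0.
pose T := \sum_s w s * slope_bound s.
have m0 : 0 < w s * b s by rewrite mulr_gt0 // lt_def bn0 b_ge0.
pose t := expR (- (`|T| / (w s * b s) + 1)).
have t0 : 0 < t by exact: expR_gt0.
have t1 : t <= 1 by rewrite expR_le1 oppr_le0 addr_ge0 ?divr_ge0 ?(ltW m0).
have lnt : ln t = - (`|T| / (w s * b s) + 1) by rewrite expRK.
have ifs_le : \sum_s' w s' * (if a s' == 0 then b s' * ln t else 0) <= w s * b s * ln t.
  rewrite (bigD1 s) //= a0 eqxx mulrA gerDl; apply: sumr_le0 => s' _.
  case: ifP => _; rewrite ?mulr0 //.
  by apply: mulr_ge0_le0; [exact: ltW | apply: mulr_ge0_le0 => //; exact: ln_le0].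
have diff_le : wklr (segment t) c - wklr a c
    <= t * (T + \sum_s' w s' * (if a s' == 0 then b s' * ln t else 0)).
  rewrite /wklr -sumrB /T -big_split mulr_sumr; apply: ler_sum => s' _ /=.
  rewrite -mulrBr -mulrDr mulrCA; apply: ler_wpM2l; first exact: ltW.
  by apply: klr_segment_le; rewrite t0.
have : 0 <= wklr (segment t) c - wklr a c by rewrite subr_ge0 a_min ?t0.
apply/negP; rewrite -ltNge (le_lt_trans diff_le) // pmulr_rlt0 //.
apply: (@le_lt_trans _ _ (T + w s * b s * ln t)); first by rewrite lerD2l.
rewrite lnt mulrN mulrDr mulr1 mulrC divfK ?gt_eqF //.
by rewrite opprD addrA; have := ler_norm T; lra.
Qed.

Lemma segment_min_zero s : a s = 0 -> b s = 0.
Proof. by move=> a0; apply/eqP; apply: contraT => /segment_min_support; rewrite a0 eqxx. Qed.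

Let three_point u s : 0 <= u s -> (a s = 0 -> u s = 0) ->
  klr (u s) (c s) = klr (u s) (a s) + klr (a s) (c s) + (u s - a s) * (ln (a s) - ln (c s)).
Proof.
move=> u0 uz; case: (eqVneq (a s) 0) => [a0|an0].
  by rewrite uz // a0 /klr eqxx; ring.
exact: klr_three_point (a_gt0 an0) (c_gt0 an0).
Qed.

Lemma wklr_pythagoras : wklr b a + wklr a c <= wklr b c.
Proof.
pose L := \sum_s w s * ((b s - a s) * (ln (a s) - ln (c s))).
pose Q := \sum_s w s * ((b s - a s) ^+ 2 / a s).
have segment0 t s : a s = 0 -> segment t s = 0.
  by move=> a0; rewrite /segment a0 segment_min_zero //; ring.
have wklr_b : wklr b c = wklr b a + wklr a c + L.
  rewrite /wklr /L -!big_split; apply: eq_bigr => s _ /=.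
  by rewrite (three_point (b_ge0 s) (@segment_min_zero s)); ring.
have wklr_segment t : 0 < t <= 1 ->
    wklr (segment t) c = wklr (segment t) a + wklr a c + t * L.
  case/andP=> t0 t1; rewrite /wklr /L mulr_sumr -!big_split; apply: eq_bigr => s _ /=.
  rewrite (three_point (segment_ge0 (ltW t0) t1 s) (segment0 t s)) /segment; ring.
have wklr_segment_le t : 0 < t <= 1 -> wklr (segment t) a <= t ^+ 2 * Q.
  case/andP=> t0 t1; rewrite /Q mulr_sumr; apply: ler_sum => s _.
  rewrite mulrCA ler_wpM2l ?(ltW (w_gt0 s)) //.
  case: (eqVneq (a s) 0) => [a0|an0].
    by rewrite segment0 // a0 /klr eqxx invr0 !mulr0.
  have -> : t ^+ 2 * ((b s - a s) ^+ 2 / a s) = (segment t s - a s) ^+ 2 / a s.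
    by rewrite /segment; ring.
  exact: klr_le_sqr (segment_ge0 (ltW t0) t1 s) (a_gt0 an0).
suff L0 : 0 <= L by rewrite wklr_b lerDl.
apply: (@affine_ge0_intercept _ Q) => t /[dup] /andP[t0 _] t01.
rewrite -(pmulr_rge0 _ t0) mulrDr mulrA -expr2.
have := a_min t01; rewrite wklr_segment // => min_t.
have := wklr_segment_le t t01; lra.
Qed.

End WeightedPythagoras.

Lemma esum_ge0_eqy (R : realType) (I : finType) (f : I -> \bar R) i :
  (forall j, (0 <= f j)%E) -> f i = +oo%E -> (\sum_j f j)%E = +oo%E.
Proof.
move=> f_ge0 fi; apply/esum_eqyP => [j _|]; first by rewrite -ltNye (lt_le_trans ltNy0).
by exists i; rewrite mem_index_enum.
Qed.

Section PolicyDivergence.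
Variables (R : realType) (X Y : finType) (P : X -> R).
Hypothesis P_gt0 : forall x, 0 < P x.
Implicit Types a b c : policy R X Y.

Definition nonneg_policy b := forall x k, 0 <= b x k.

Definition abs_cont b c := forall x k, b x k != 0 -> c x k != 0.

Lemma Pi_all_nonneg b : Pi_all b -> nonneg_policy b.
Proof. by move=> b_simplex x k; case: (b_simplex x). Qed.

Definition flat_policy b (s : X * Y) : R := b s.1 s.2.

Lemma kl_term_ge0 (p q : R) : 0 <= p -> 0 <= q -> (0 <= kl_term p q)%E.
Proof.
move=> p0 q0; case: (eqVneq q 0) => [->|qn0]; last first.
  by rewrite kl_termE // lee_fin klr_ge0.
by rewrite /kl_term eqxx; case: eqP; rewrite ?leey.
Qed.

Lemma Bdiv_ge0 b c : nonneg_policy b -> nonneg_policy c -> (0 <= Bdiv P b c)%E.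
Proof.
move=> b0 c0; apply: sume_ge0 => x _; rewrite mule_ge0 ?lee_fin ?(ltW (P_gt0 x)) //.
by apply: sume_ge0 => k _; apply: kl_term_ge0.
Qed.

Lemma Bdiv_eq_pinfty b c : nonneg_policy b -> nonneg_policy c -> ~ abs_cont b c ->
  Bdiv P b c = +oo%E.
Proof.
move=> b0 c0 /existsNP[x /existsNP[k /not_implyP[bn /negP/negbNE/eqP c_eq0]]].
apply: (esum_ge0_eqy (i := x)).
  move=> x'; rewrite mule_ge0 ?lee_fin ?(ltW (P_gt0 x')) //.
  by apply: sume_ge0 => k' _; apply: kl_term_ge0.
rewrite /KL (esum_ge0_eqy (i := k)) ?gt0_muley ?lte_fin //.
  by move=> k'; apply: kl_term_ge0.
by rewrite /kl_term (negbTE bn) c_eq0 eqxx.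
Qed.

Lemma BdivE b c : abs_cont b c ->
  Bdiv P b c = (\sum_x P x * \sum_k klr (b x k) (c x k))%:E.
Proof.
move=> bc; rewrite /Bdiv -sumEFin; apply: eq_bigr => x _.
rewrite EFinM /KL -sumEFin; congr (_ * _)%E; apply: eq_bigr => k _.
exact/kl_termE/bc.
Qed.

Lemma Bdiv_wklr b c : abs_cont b c ->
  Bdiv P b c = (wklr (fun s => P s.1) (flat_policy b) (flat_policy c))%:E.
Proof.
move/BdivE ->; congr _%:E; under eq_bigr do rewrite mulr_sumr.
exact: pair_bigA.
Qed.

Lemma Bdiv_pythagoras (C : policy R X Y -> Prop) a b c :
  convex_family C -> (forall p, C p -> nonneg_policy p) -> nonneg_policy c ->
  C a -> C b -> (forall p, C p -> (Bdiv P a c <= Bdiv P p c)%E) ->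
  (Bdiv P b a + Bdiv P a c <= Bdiv P b c)%E.
Proof.
move=> C_conv C_ge0 c0 Ca Cb a_min.
have [bc|nbc] := pselect (abs_cont b c); last first.
  by rewrite (Bdiv_eq_pinfty (C_ge0 b Cb) c0 nbc) leey.
have ac : abs_cont a c.
  apply: contrapT => nac; move: (a_min b Cb).
  by rewrite (Bdiv_eq_pinfty (C_ge0 a Ca) c0 nac) Bdiv_wklr.
have segment_ac t : abs_cont (fun x k => t * b x k + (1 - t) * a x k) c.
  move=> x k; apply: contraNN => /eqP c_eq0.
  case: (eqVneq (b x k) 0) => [->|/bc]; last by rewrite c_eq0 eqxx.
  case: (eqVneq (a x k) 0) => [->|/ac]; last by rewrite c_eq0 eqxx.
  by rewrite !mulr0 addr0.
have w_gt0 (s : X * Y) : 0 < P s.1 by [].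
have flat_ge0 p (Cp : C p) (s : X * Y) : 0 <= flat_policy p s by apply: C_ge0.
have c_ge0 (s : X * Y) : 0 <= flat_policy c s by apply: c0.
have flat_bc (s : X * Y) : flat_policy b s != 0 -> flat_policy c s != 0 by apply: bc.
have flat_ac (s : X * Y) : flat_policy a s != 0 -> flat_policy c s != 0 by apply: ac.
have segment_min t : 0 < t <= 1 -> wklr (fun s => P s.1) (flat_policy a) (flat_policy c)
    <= wklr (fun s => P s.1) (segment (flat_policy a) (flat_policy b) t) (flat_policy c).
  case/andP=> t0 t1; have := a_min _ (C_conv b a Cb Ca t _).
  by rewrite ltW //= t1 (Bdiv_wklr ac) (Bdiv_wklr (segment_ac t)) lee_fin; apply.
have ba : abs_cont b a := fun x k => segment_min_support w_gt0 (flat_ge0 a Ca)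
  (flat_ge0 b Cb) c_ge0 flat_bc flat_ac segment_min (s := (x, k)).
rewrite !Bdiv_wklr // -EFinD lee_fin.
exact: wklr_pythagoras w_gt0 (flat_ge0 a Ca) (flat_ge0 b Cb) c_ge0 flat_bc flat_ac segment_min.
Qed.

End PolicyDivergence.

Lemma two_hell2E (R : realType) (Y : finType) (p p' : Y -> R) :
  in_simplex p -> in_simplex p' ->
  2 * hell2 p p' = \sum_k (Num.sqrt (p k) - Num.sqrt (p' k)) ^+ 2.
Proof.
case=> p0 p1 [p'0 p'1].
have -> : \sum_k (Num.sqrt (p k) - Num.sqrt (p' k)) ^+ 2
    = \sum_k p k + \sum_k p' k - 2 * \sum_k Num.sqrt (p k * p' k).
  rewrite mulr_sumr -big_split -sumrB; apply: eq_bigr => k _ /=.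
  by rewrite sqrtrM // sqrrB !sqr_sqrtr //; ring.
by rewrite p1 p'1 /hell2; ring.
Qed.

Section InvolutionPairing.
Variables (R : realType) (X Y : finType) (P : X -> R) (Phi : X -> X).
Hypotheses (P_gt0 : forall x, 0 < P x) (Phi_invol : involution Phi).

Lemma sum_involution (f : X -> R) : \sum_x f (Phi x) = \sum_x f x.
Proof. by rewrite [RHS](reindex_inj (can_inj Phi_invol)). Qed.

(* Splitting the factor [2] between [x] and [Phi x]:
   [(P x + P (Phi x)) * min (lambda x) (1 - lambda x) = min (P x) (P (Phi x))]. *)
Lemma lambda_min_weightE (h : X -> R) : (forall x, h (Phi x) = h x) ->
  \sum_x P x * (2 * Num.min (lambda P Phi x) (1 - lambda P Phi x) * h x)
    = \sum_x Num.min (P x) (P (Phi x)) * h x.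
Proof.
move=> h_sym.
pose W x := P x + P (Phi x).
pose m x := Num.min (P x) (P (Phi x)).
have W_gt0 x : 0 < W x by rewrite addr_gt0.
have W_sym x : W (Phi x) = W x by rewrite /W Phi_invol addrC.
have m_sym x : m (Phi x) = m x by rewrite /m Phi_invol minC.
pose f x := P x * (m x / W x) * h x.
have termE x : P x * (2 * Num.min (lambda P Phi x) (1 - lambda P Phi x) * h x) = f x + f x.
  have -> : 1 - lambda P Phi x = P (Phi x) / W x.
    by rewrite /lambda /W; field; exact: lt0r_neq0 (W_gt0 x).
  by rewrite /lambda -/(W x) -minr_pMl ?invr_ge0 ?ltW // -/(m x) /f; ring.
rewrite (eq_bigr _ (fun x _ => termE x)) big_split /= -{2}sum_involution -big_split /=.
apply: eq_bigr => x _; rewrite /f W_sym m_sym h_sym /m /W.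
by field; exact: lt0r_neq0 (W_gt0 x).
Qed.

Lemma Bdiv_ge_hellinger (q pi0 : policy R X Y) : C_coh_dag Phi q -> Pi_all pi0 ->
  ((\sum_x P x * (2 * Num.min (lambda P Phi x) (1 - lambda P Phi x)
                     * hell2 (pi0 x) (pi0 (Phi x))))%:E
   <= Bdiv P q pi0)%E.
Proof.
case=> q_ge0 q_sym pi0_simplex.
have pi0_ge0 := Pi_all_nonneg pi0_simplex.
have [qc|nqc] := pselect (abs_cont q pi0); last first.
  by rewrite (Bdiv_eq_pinfty P_gt0 q_ge0 pi0_ge0 nqc) leey.
have qc_sym x k : q x k != 0 -> pi0 (Phi x) k != 0 by rewrite q_sym; apply: qc.
rewrite BdivE // lee_fin lambda_min_weightE; last first.
  by move=> x; rewrite /hell2 Phi_invol; under eq_bigr do rewrite mulrC.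
pose G x := \sum_k klr (q x k) (pi0 x k).
pose m x := Num.min (P x) (P (Phi x)).
have G_ge0 x : 0 <= G x.
  by apply: sumr_ge0 => k _; exact: klr_ge0 (q_ge0 x k) (pi0_ge0 x k) (qc x k).
have G_sym x : G (Phi x) = \sum_k klr (q x k) (pi0 (Phi x) k) by rewrite /G -q_sym.
have pair_le x : 2 * (m x * hell2 (pi0 x) (pi0 (Phi x)))
    <= P x * G x + P (Phi x) * G (Phi x).
  have hell_le : 2 * hell2 (pi0 x) (pi0 (Phi x)) <= G x + G (Phi x).
    rewrite two_hell2E // G_sym /G -big_split; apply: ler_sum => k _.
    exact: sqr_sub_sqrt_le_klrD (q_ge0 x k) (pi0_ge0 x k) (pi0_ge0 (Phi x) k)
      (qc x k) (qc_sym x k).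
  rewrite mulrCA; apply: le_trans (_ : m x * (G x + G (Phi x)) <= _).
    by rewrite ler_wpM2l // le_min !ltW.
  by rewrite mulrDr lerD // ler_wpM2r // ge_min lexx ?orbT.
have : \sum_x 2 * (m x * hell2 (pi0 x) (pi0 (Phi x)))
    <= \sum_x (P x * G x + P (Phi x) * G (Phi x)) by apply: ler_sum => x _.
by rewrite big_split /= (sum_involution (fun x => P x * G x)) -mulr_sumr; lra.
Qed.

End InvolutionPairing.

Lemma convex_familyI (R : realType) (X Y : finType) (C D : policy R X Y -> Prop) :
  convex_family C -> convex_family D -> convex_family (fun p => C p /\ D p).
Proof.
by move=> C_conv D_conv p q [Cp Dp] [Cq Dq] t t01; split; [apply: C_conv | apply: D_conv].
Qed.

Lemma convex_family_C_coh_dag (R : realType) (X Y : finType) (Phi : X -> X) :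
  convex_family (@C_coh_dag R X Y Phi).
Proof.
move=> p q [p_ge0 p_sym] [q_ge0 q_sym] t /andP[t0 t1]; split.
  by move=> x k; rewrite addr_ge0 ?mulr_ge0 ?subr_ge0.
by move=> x; rewrite [p x]p_sym [q x]q_sym.
Qed.

Lemma convex_family_Pi_all (R : realType) (X Y : finType) : convex_family (@Pi_all R X Y).
Proof.
move=> p q p_simplex q_simplex t /andP[t0 t1] x.
case: (p_simplex x) (q_simplex x) => [p_ge0 p1] [q_ge0 q1]; split.
  by move=> k; rewrite addr_ge0 ?mulr_ge0 ?subr_ge0.
by rewrite big_split /= -!mulr_sumr p1 q1 !mulr1 subrKC.
Qed.

Theorem corollary4 (R : realType) (X Y : finType)
  (P : X -> R) (HP : full_support_distr P)
  (Phi : X -> X) (HPhi : involution Phi)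
  (Pi : policy R X Y -> Prop) (HPi_sub : forall pi, Pi pi -> Pi_all pi)
  (HPi_closed : closed_family Pi) (HPi_conv : convex_family Pi)
  (pi0 : policy R X Y) (Hpi0 : Pi_all pi0)
  (pistar : policy R X Y) (Hstar_coh : C_coh Phi pistar) (Hstar_Pi : Pi pistar)
  (pibar : policy R X Y) (Hbar_in : C_coh_dag Phi pibar)
  (Hbar_min : forall pi, C_coh_dag Phi pi -> (Bdiv P pibar pi0 <= Bdiv P pi pi0)%E)
  (pihh : policy R X Y) (Hhh_coh : C_coh Phi pihh) (Hhh_Pi : Pi pihh)
  (Hhh_min : forall pi, C_coh Phi pi -> Pi pi -> (Bdiv P pihh pibar <= Bdiv P pi pibar)%E) :
  (Bdiv P pistar pihh
     + (\sum_(x : X) P x * (2 * Num.min (lambda P Phi x) (1 - lambda P Phi x)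
                              * hell2 (pi0 x) (pi0 (Phi x))))%:E
   <= Bdiv P pistar pi0)%E.
Proof.
(* [HPi_sub] and [HPi_closed] only guarantee that the projections exist; here they are given. *)
have P_gt0 x : 0 < P x by case: HP.
have pibar_ge0 : nonneg_policy pibar by case: Hbar_in.
have pihh_ge0 : nonneg_policy pihh by case: Hhh_coh => [[]].
have pythagoras_bar : (Bdiv P pistar pibar + Bdiv P pibar pi0 <= Bdiv P pistar pi0)%E.
  apply: (Bdiv_pythagoras P_gt0 (@convex_family_C_coh_dag R X Y Phi) _
    (Pi_all_nonneg Hpi0) Hbar_in (proj1 Hstar_coh) Hbar_min).
  by move=> p [].
have pythagoras_hh : (Bdiv P pistar pihh + Bdiv P pihh pibar <= Bdiv P pistar pibar)%E.
  apply: (Bdiv_pythagoras P_gt0 (C := fun p => C_coh Phi p /\ Pi p)) => //.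
  - apply: convex_familyI HPi_conv.
    exact: convex_familyI (@convex_family_C_coh_dag R X Y Phi) (@convex_family_Pi_all R X Y).
  - by move=> p [[[]]].
  - by move=> p []; apply: Hhh_min.
have hellinger := Bdiv_ge_hellinger P_gt0 HPhi Hbar_in Hpi0.
apply: le_trans pythagoras_bar; apply: le_trans (leeD pythagoras_hh (lexx _)).
by rewrite -addeA leeD2l // lee_paddl // Bdiv_ge0.
Qed.
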